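(* Let $\mathbf C$ be the covariance matrix of a Matérn Gaussian process with parameters $(\sigma_0^2,\phi_0,\nu_0)$ evaluated at locations $s_1,\dots,s_n\in\mathbb R^2$ satisfying $\|s_i-s_j\|\ge h$ for all $i\ne j$, for a fixed $h>0$, and let $\tau_0^2\ge0$. Then the maximum eigenvalue of $\boldsymbol\Sigma=\mathbf C+\tau_0^2\mathbf I$ has an upper bound $\Psi_{high}<\infty$ that is uniform in $n$.
   Context: Matérn covariance: $\mathbf C_{ij}=C(\|s_i-s_j\|)$ with $C(d)=\frac{2^{1-\nu_0}\sigma_0^2(\sqrt2\phi_0d)^{\nu_0}}{\Gamma(\nu_0)}\mathcal K_{\nu_0}(\sqrt2\phi_0d)$ (and $C(0)=\sigma_0^2$), $\mathcal K_\nu$ the modified Bessel function of the second kind. *)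

From mathcomp Require Import all_boot all_order all_algebra.
From mathcomp Require Import all_classical all_reals all_analysis.
Set Implicit Arguments. Unset Strict Implicit. Unset Printing Implicit Defensive.
Import Order.TTheory GRing.Theory Num.Theory.
Import numFieldNormedType.Exports.
Local Open Scope classical_set_scope.
Local Open Scope ring_scope.

Definition coshR {R : realType} (t : R) : R := (expR t + expR (- t)) / 2.

Definition GammaR {R : realType} (nu : R) : R :=
  Rintegral (@lebesgue_measure R) `]0%R, +oo[
    (fun t : R => t `^ (nu - 1) * expR (- t)).

Definition BesselK {R : realType} (nu x : R) : R :=
  Rintegral (@lebesgue_measure R) `[0%R, +oo[
    (fun t : R => expR (- x * coshR t) * coshR (nu * t)).

Definition matern {R : realType} (sigma2 phi nu d : R) : R :=
  if d == 0 then sigma2 else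
  2 `^ (1 - nu) * sigma2 * (Num.sqrt 2 * phi * d) `^ nu / GammaR nu
    * BesselK nu (Num.sqrt 2 * phi * d).

Definition dist2 {R : realType} (s t : R * R) : R :=
  Num.sqrt ((s.1 - t.1) ^+ 2 + (s.2 - t.2) ^+ 2).

Definition matern_cov {R : realType} (sigma2 phi nu : R) (n : nat)
  (s : 'I_n -> R * R) : 'M[R]_n :=
  \matrix_(i, j) matern sigma2 phi nu (dist2 (s i) (s j)).

Definition Sigma_mat {R : realType} (sigma2 phi nu tau2 : R) (n : nat)
  (s : 'I_n -> R * R) : 'M[R]_n :=
  matern_cov sigma2 phi nu s + tau2%:M.

From mathcomp Require Import all_boot all_order all_algebra.
From mathcomp Require Import all_classical all_reals all_analysis.
From mathcomp Require Import ring lra measurable_realfun exponential_distribution.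
Import Order.TTheory GRing.Theory Num.Theory.
Local Open Scope ring_scope.

(* Sigma has nonnegative entries, so by Gershgorin every eigenvalue is at most
   the largest column sum.  Off the
   diagonal, K_nu(y) <= C e^(-y/2) for y bounded away from 0, so the Matern
   covariance satisfies C(d) <= A / d^4 for d >= h.  Finally, for h-separated
   points of the plane, sum_(j != i) |s_j - s_i|^-4 is bounded independently
   of n: the squares of side h/2 of a grid anchored at s_i contain at most one
   point each, and a point in square (a, b) contributes at most
   (16 / (h/2)^4) (|a| + 1)^-2 (|b| + 1)^-2, which is summable over Z^2. *)

Section matern_decay.
Local Open Scope classical_set_scope.
Variable R : realType.
Implicit Types t y : R.

Lemma coshR_ge1 t : 1 <= coshR t.
Proof. by rewrite /coshR; have := expR_ge1Dx t; have := expR_ge1Dx (- t); lra. Qed.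

Lemma coshR_le_expR t : 0 <= t -> coshR t <= expR t.
Proof.
move=> t0; have : expR (- t) <= expR t by rewrite ler_expR; lra.
by rewrite /coshR; have := expR_ge0 t; lra.
Qed.

Lemma sqr_le_coshR t : 0 <= t -> t ^+ 2 / 8 <= coshR t.
Proof.
move=> t0; have eexp : expR t = expR (t / 2) ^+ 2.
  by rewrite expr2 -expRD; congr expR; field.
have := expR_ge1Dx (t / 2); have := expR_ge0 (- t).
by rewrite /coshR eexp; nra.
Qed.

Lemma measurable_coshR : measurable_fun setT (@coshR R).
Proof.
apply: measurable_funM => //; apply: measurable_funD; first exact: measurable_expR.
exact: measurableT_comp (@measurable_expR R) _.
Qed.

Lemma Rintegral_itvcy_le_expRN (f : R -> R) (C : R) : measurable_fun setT f ->
  (forall t, 0 <= t -> 0 <= f t <= C * expR (- t)) ->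
  Rintegral lebesgue_measure `[0%R, +oo[ f <= C.
Proof.
move=> mf fC; have C0 : 0 <= C.
  have /andP[f0 fC0] := fC 0 (lexx 0).
  by rewrite oppr0 expR0 mulr1 in fC0; exact: le_trans f0 fC0.
have fE t : 0 <= t -> C * expR (- t) = C * exponential_pdf 1 t.
  by move=> t0; rewrite exponential_pdfE // mul1r mulN1r.
have int_ge0 : (0 <= \int[lebesgue_measure]_(t in `[0%R, +oo[) (f t)%:E)%E.
  by apply: integral_ge0 => t; rewrite /= in_itv /= andbT lee_fin => /fC /andP[].
have int_le : (\int[lebesgue_measure]_(t in `[0%R, +oo[) (f t)%:E <= C%:E)%E.
  apply: (@le_trans _ _ (\int[lebesgue_measure]_(t in `[0%R, +oo[)
      (C%:E * (exponential_pdf 1 t)%:E))%E).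
    apply: ge0_le_integral => //.
    - by move=> t /=; rewrite in_itv /= andbT lee_fin => /fC /andP[].
    - by apply/measurable_EFinP; exact: measurable_funTS mf.
    - apply/measurable_EFinP/measurable_funM => //.
      exact: measurable_funTS (measurable_exponential_pdf _).
    - move=> t /=; rewrite in_itv /= andbT => t0.
      by rewrite -EFinM lee_fin -fE //; have /andP[] := fC t t0.
  rewrite ge0_integralZl //; last 2 first.
  - by apply/measurable_EFinP; exact: measurable_funTS (measurable_exponential_pdf _).
  - by move=> t _; rewrite lee_fin exponential_pdf_ge0.
  rewrite -[leRHS]mule1 lee_wpmul2l ?lee_fin //.
  rewrite -(integral_exponential_pdf (R := R) ltr01) ge0_subset_integral //.
  - by apply/measurable_EFinP; exact: measurable_exponential_pdf.
  - by move=> t _; rewrite lee_fin exponential_pdf_ge0.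
rewrite /Rintegral; move: int_ge0 int_le.
by case: (\int[_]_(_ in _) _)%E => //= r; rewrite !lee_fin.
Qed.

Lemma BesselK_ge0 (nu y : R) : 0 <= BesselK nu y.
Proof.
apply: Rintegral_ge0 => t _.
by rewrite mulr_ge0 ?expR_ge0 // (le_trans ler01) ?coshR_ge1.
Qed.

Lemma BesselK_integrand_le (y0 nu y t : R) : 0 < y0 -> 0 <= nu -> y0 <= y -> 0 <= t ->
  expR (- y * coshR t) * coshR (nu * t)
    <= expR (- y / 2 + 4 * (nu + 1) ^+ 2 / y0) * expR (- t).
Proof.
move=> y00 nu0 y0y t0.
have cosh_nu := coshR_le_expR _ (mulr_ge0 nu0 t0).
apply: le_trans (ler_wpM2l (expR_ge0 _) cosh_nu) _.
rewrite -!expRD ler_expR.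
have amgm : (nu + 1) * t <= y0 * t ^+ 2 / 16 + 4 * (nu + 1) ^+ 2 / y0.
  have -> : y0 * t ^+ 2 / 16 + 4 * (nu + 1) ^+ 2 / y0
      = (nu + 1) * t + (y0 * t / 4 - 2 * (nu + 1)) ^+ 2 / y0.
    by field; rewrite gt_eqF.
  by rewrite lerDl divr_ge0 ?sqr_ge0 // ltW.
have quad : y0 * (t ^+ 2 / 8) <= y * coshR t.
  by apply: ler_pM; rewrite ?divr_ge0 ?sqr_ge0 ?sqr_le_coshR // ltW.
have := coshR_ge1 t; nra.
Qed.

Lemma BesselK_le (y0 nu y : R) : 0 < y0 -> 0 <= nu -> y0 <= y ->
  BesselK nu y <= expR (- y / 2 + 4 * (nu + 1) ^+ 2 / y0).
Proof.
move=> y00 nu0 y0y; apply: Rintegral_itvcy_le_expRN.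
  apply: measurable_funM; last exact: measurableT_comp measurable_coshR _.
  apply: measurableT_comp; first exact: measurable_expR.
  exact: measurable_funM measurable_coshR.
move=> t t0; rewrite BesselK_integrand_le // andbT.
by rewrite mulr_ge0 ?expR_ge0 // (le_trans ler01) ?coshR_ge1.
Qed.

Lemma powR_le_expR (y a : R) : 0 < y -> 0 < a ->
  y `^ a <= expR (y / 4 + a * ln (4 * a)).
Proof.
move=> y0 a0; rewrite /powR gt_eqF // ler_expR.
have a4 : 0 < 4 * a by rewrite mulr_gt0.
have -> : ln y = ln (y / (4 * a)) + ln (4 * a).
  by rewrite -lnM ?posrE ?divr_gt0 // divfK // gt_eqF.
have ln_le : a * ln (y / (4 * a)) <= y / 4.
  have -> : y / 4 = a * (y / (4 * a)) by field; rewrite gt_eqF.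
  by rewrite ler_pM2l // ltW // ln_sublinear // divr_gt0.
by rewrite mulrDr lerD2r.
Qed.

Lemma powR_BesselK_le (y0 nu y : R) : 0 < y0 -> 0 < nu -> y0 <= y ->
  y `^ nu * y ^+ 4 * BesselK nu y
    <= expR (nu * ln (4 * nu) + 4 * ln (4 * 4) + 4 * (nu + 1) ^+ 2 / y0).
Proof.
move=> y00 nu0 y0y; have y_gt0 : 0 < y by apply: lt_le_trans y0y.
have pow4 : y ^+ 4 <= expR (y / 4 + 4 * ln (4 * 4)).
  by rewrite -powR_mulrn ?(ltW y_gt0) //; apply: powR_le_expR.
have -> : nu * ln (4 * nu) + 4 * ln (4 * 4) + 4 * (nu + 1) ^+ 2 / y0
    = (y / 4 + nu * ln (4 * nu)) + (y / 4 + 4 * ln (4 * 4))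
      + (- y / 2 + 4 * (nu + 1) ^+ 2 / y0) by field; rewrite gt_eqF.
rewrite expRD; apply: ler_pM.
- by rewrite mulr_ge0 ?powR_ge0 ?exprn_ge0 // ltW.
- exact: BesselK_ge0.
- by rewrite expRD; apply: ler_pM; rewrite ?powR_ge0 ?exprn_ge0 ?powR_le_expR // ltW.
- exact: BesselK_le (ltW nu0) y0y.
Qed.

Lemma GammaR_ge0 (nu : R) : 0 <= GammaR nu.
Proof. by apply: Rintegral_ge0 => t _; rewrite mulr_ge0 ?powR_ge0 ?expR_ge0. Qed.

Lemma matern_ge0 (sigma2 phi nu d : R) : 0 <= sigma2 -> 0 <= matern sigma2 phi nu d.
Proof.
move=> s0; rewrite /matern; case: ifP => // _.
by rewrite !mulr_ge0 ?powR_ge0 ?invr_ge0 ?GammaR_ge0 ?BesselK_ge0.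
Qed.

Lemma matern_decay (sigma2 phi nu h : R) :
  0 <= sigma2 -> 0 < phi -> 0 < nu -> 0 < h ->
  exists2 A, 0 <= A & forall d, h <= d -> matern sigma2 phi nu d <= A / d ^+ 4.
Proof.
move=> s0 phi0 nu0 h0; set a := Num.sqrt 2 * phi.
have a0 : 0 < a by rewrite mulr_gt0 // sqrtr_gt0.
set k := 2 `^ (1 - nu) * sigma2 / GammaR nu / a ^+ 4.
have k0 : 0 <= k by rewrite !mulr_ge0 ?powR_ge0 ?invr_ge0 ?GammaR_ge0 ?exprn_ge0 // ltW.
set E := expR (nu * ln (4 * nu) + 4 * ln (4 * 4) + 4 * (nu + 1) ^+ 2 / (a * h)).
exists (k * E); first by rewrite mulr_ge0 ?expR_ge0.
move=> d hd; have d0 : 0 < d by apply: lt_le_trans hd.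
rewrite ler_pdivlMr ?exprn_gt0 // /matern gt_eqF // -/a.
have -> : 2 `^ (1 - nu) * sigma2 * (a * d) `^ nu / GammaR nu * BesselK nu (a * d) * d ^+ 4
    = k * ((a * d) `^ nu * (a * d) ^+ 4 * BesselK nu (a * d)).
  (* generalizing GammaR nu avoids a side condition GammaR nu != 0 from field *)
  rewrite /k [(a * d) ^+ 4]exprMn; move: (GammaR nu)^-1 => g.
  by field; rewrite gt_eqF.
by rewrite ler_wpM2l // powR_BesselK_le ?mulr_gt0 ?ler_pM2l.
Qed.

End matern_decay.

Section packing.
Variable R : realType.
Implicit Types (c x y z : R) (p q : R * R).

Lemma dist2_xx p : dist2 p p = 0.
Proof. by rewrite /dist2 !subrr expr0n addr0 sqrtr0. Qed.

Lemma normr_sub1_le_dist2 p q : `|p.1 - q.1| <= dist2 p q.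
Proof. by rewrite -sqrtr_sqr ler_sqrt ?addr_ge0 ?sqr_ge0 // lerDl sqr_ge0. Qed.

Lemma normr_sub2_le_dist2 p q : `|p.2 - q.2| <= dist2 p q.
Proof. by rewrite -sqrtr_sqr ler_sqrt ?addr_ge0 ?sqr_ge0 // lerDr sqr_ge0. Qed.

Lemma normr_floor_le x : `|(Num.floor x)%:~R| <= `|x| + 1 :> R.
Proof.
have := floor_le x; have := floorD1_gt x; rewrite intrD.
have := ler_norm x; have := ler_norm (- x); rewrite normrN ler_norml; lra.
Qed.

Lemma floor_eq_dist_lt1 x y : Num.floor x = Num.floor y -> `|x - y| < 1.
Proof.
move=> exy; have := floor_le x; have := floorD1_gt x.
have := floor_le y; have := floorD1_gt y.
by rewrite !intrD exy ltr_norml; lra.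
Qed.

Definition cell c p q : int * int :=
  (Num.floor ((q.1 - p.1) / c), Num.floor ((q.2 - p.2) / c)).

Lemma cell_eq_dist2_lt [c p q1 q2] : 0 < c ->
  cell c p q1 = cell c p q2 -> dist2 q1 q2 < 2 * c.
Proof.
move=> c0 [/floor_eq_dist_lt1 e1 /floor_eq_dist_lt1 e2].
have close z1 z2 z : `|(z1 - z) / c - (z2 - z) / c| < 1 -> (z1 - z2) ^+ 2 < c ^+ 2.
  rewrite -mulrBl opprB addrA subrK normrM [`|c^-1|]gtr0_norm ?invr_gt0 //.
  rewrite ltr_pdivrMr // mul1r => lt.
  by rewrite -real_normK ?num_real // ltr_pXn2r // ?nnegrE ?normr_ge0 ?ltW.
have := close _ _ _ e1; have := close _ _ _ e2.
rewrite -[2 * c]gtr0_norm ?mulr_gt0 // -sqrtr_sqr /dist2 ltr_sqrt ?exprn_gt0 ?mulr_gt0 //.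
by nra.
Qed.

Definition inv_sqS (k : nat) : R := (k.+1%:R ^+ 2)^-1.

Lemma inv_sqS_ge0 k : 0 <= inv_sqS k.
Proof. by rewrite invr_ge0 sqr_ge0. Qed.

Lemma floor_div_normS_le c z : 0 < c ->
  c * (`|Num.floor (z / c)|%N.+1)%:R <= `|z| + 2 * c.
Proof.
move=> c0; rewrite -addn1 natrD natr_absz intr_norm.
have := normr_floor_le (z / c); rewrite normrM [`|c^-1|]gtr0_norm ?invr_gt0 // => fl.
have := ler_wpM2l (ltW c0) fl; rewrite mulrDr mulrCA mulfV ?gt_eqF //; lra.
Qed.

Lemma inv_dist2_pow4_le_cell c p q : 0 < c -> 2 * c <= dist2 q p ->
  (dist2 q p ^+ 4)^-1
    <= 16 / c ^+ 4 * (inv_sqS `|(cell c p q).1|%N * inv_sqS `|(cell c p q).2|%N).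
Proof.
move=> c0 cd; set d := dist2 q p in cd *; rewrite /inv_sqS -invfM.
set a := (`|(cell c p q).1|%N.+1)%:R; set b := (`|(cell c p q).2|%N.+1)%:R.
have ca : c * a <= 2 * d.
  apply: le_trans (floor_div_normS_le c (q.1 - p.1) c0) _.
  by have := normr_sub1_le_dist2 q p; rewrite -/d; lra.
have cb : c * b <= 2 * d.
  apply: le_trans (floor_div_normS_le c (q.2 - p.2) c0) _.
  by have := normr_sub2_le_dist2 q p; rewrite -/d; lra.
have a0 : 0 < a by rewrite ltr0n.
have b0 : 0 < b by rewrite ltr0n.
have d0 : 0 < d by apply: lt_le_trans cd; rewrite mulr_gt0.
clearbody a b.
have -> : 16 / c ^+ 4 * (a ^+ 2 * b ^+ 2)^-1 = ((c * a) ^+ 2 * (c * b) ^+ 2 / 16)^-1.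
  by rewrite !exprMn; field; rewrite !gt_eqF.
rewrite lef_pV2 ?posrE ?divr_gt0 ?mulr_gt0 ?exprn_gt0 // ler_pdivrMr //.
have sq u : 0 <= u -> u <= 2 * d -> u ^+ 2 <= 4 * d ^+ 2.
  by move=> u0 ud; have := ler_pM u0 u0 ud ud; nra.
have -> : d ^+ 4 * 16 = (4 * d ^+ 2) * (4 * d ^+ 2) by ring.
by apply: ler_pM; rewrite ?sqr_ge0 // sq // mulr_ge0 // ltW.
Qed.

Lemma sum_inv_sqS_le N : \sum_(k < N.+1) inv_sqS k <= 2 - (N.+1%:R)^-1.
Proof.
elim: N => [|N IH]; first by rewrite big_ord1 /inv_sqS expr1n invr1; lra.
rewrite big_ord_recr /=; set m : R := N.+1%:R in IH *.
have m0 : 0 < m by rewrite ltr0n.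
have -> : N.+2%:R = m + 1 by rewrite -natr1.
have telescope : inv_sqS N.+1 <= m^-1 - (m + 1)^-1.
  have -> : m^-1 - (m + 1)^-1 = inv_sqS N.+1 + (m * (m + 1) ^+ 2)^-1.
    by rewrite /inv_sqS -/m -natr1 -/m; field; rewrite !gt_eqF ?ltr_wpDr.
  by rewrite lerDl invr_ge0 mulr_ge0 ?sqr_ge0 ?ltW.
by clearbody m; lra.
Qed.

Lemma sum_signed_inv_sqS_le N :
  \sum_(x : (bool * 'I_N) * (bool * 'I_N)) inv_sqS x.1.2 * inv_sqS x.2.2 <= 16.
Proof.
have sum1 : \sum_(k < N) inv_sqS k <= 2.
  case: N => [|N]; first by rewrite big_ord0.
  by apply: le_trans (sum_inv_sqS_le N) _; rewrite gerBl invr_ge0.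
have sum2 : \sum_(x : bool * 'I_N) inv_sqS x.2 <= 4.
  by rewrite -(pair_bigA _ (fun (_ : bool) (k : 'I_N) => inv_sqS k)) /= big_bool /=; lra.
rewrite -(pair_bigA _ (fun x y : bool * 'I_N => inv_sqS x.2 * inv_sqS y.2)) /=.
rewrite -big_distrlr /= (_ : 16 = 4 * 4 :> R); last by rewrite -natrM.
by apply: ler_pM; rewrite ?sumr_ge0 // => x _; rewrite inv_sqS_ge0.
Qed.

Definition signed_ord N (z : int) : bool * 'I_N.+1 := (z < 0, inord `|z|%N).

Lemma signed_ord_inj [N] [z1 z2 : int] : (`|z1| <= N)%N -> (`|z2| <= N)%N ->
  signed_ord N z1 = signed_ord N z2 -> z1 = z2.
Proof.
move=> le1 le2 [sgn /(congr1 val)]; rewrite /= !inordK ?ltnS //.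
by case: z1 z2 sgn {le1 le2} => [m1|m1] [m2|m2] //= _ [->].
Qed.

Lemma sum_inv_dist2_pow4_le (I : finType) (P : {pred I}) (s : I -> R * R) p h :
  0 < h ->
  {in P &, forall j k, j != k -> h <= dist2 (s j) (s k)} ->
  {in P, forall j, h <= dist2 (s j) p} ->
  \sum_(j in P) (dist2 (s j) p ^+ 4)^-1 <= 4096 / h ^+ 4.
Proof.
move=> h0 sepP farP; set c := h / 2.
have c0 : 0 < c by rewrite divr_gt0.
have ch : 2 * c = h by rewrite /c; field.
pose M := \max_j (`|(cell c p (s j)).1| + `|(cell c p (s j)).2|)%N.
have le1 j : (`|(cell c p (s j)).1| <= M)%N.
  by apply: leq_trans (leq_bigmax j); exact: leq_addr.
have le2 j : (`|(cell c p (s j)).2| <= M)%N.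
  by apply: leq_trans (leq_bigmax j); exact: leq_addl.
pose key j := (signed_ord M (cell c p (s j)).1, signed_ord M (cell c p (s j)).2).
pose w (x : (bool * 'I_M.+1) * (bool * 'I_M.+1)) := inv_sqS x.1.2 * inv_sqS x.2.2.
have key_inj : {in P &, injective key}.
  move=> j k Pj Pk ekey; apply/eqP; apply: contraT => jk.
  have same_cell : cell c p (s j) = cell c p (s k).
    rewrite [LHS]surjective_pairing [RHS]surjective_pairing.
    by rewrite (signed_ord_inj (le1 j) (le1 k) (congr1 fst ekey))
               (signed_ord_inj (le2 j) (le2 k) (congr1 snd ekey)).
  by have := cell_eq_dist2_lt c0 same_cell; rewrite ch ltNge sepP.
have w_key j : P j -> (dist2 (s j) p ^+ 4)^-1 <= 16 / c ^+ 4 * w (key j).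
  move=> Pj; rewrite /w /= !inordK ?ltnS ?(le1 j) ?(le2 j) //.
  by apply: inv_dist2_pow4_le_cell; rewrite ?ch ?farP.
apply: le_trans (ler_sum _ w_key) _.
rewrite -mulr_sumr -(big_imset _ key_inj) /=.
have -> : 4096 / h ^+ 4 = 16 / c ^+ 4 * 16 by rewrite /c; field; rewrite gt_eqF.
apply: ler_wpM2l; first by rewrite divr_ge0 ?exprn_ge0 // ltW.
apply: le_trans _ (sum_signed_inv_sqS_le M.+1).
rewrite [leRHS](bigID [in key @: P]) /= lerDl.
by apply: sumr_ge0 => x _; rewrite mulr_ge0 ?inv_sqS_ge0.
Qed.

End packing.

Lemma eigenvalue_le_colsum (R : realFieldType) n (M : 'M[R]_n) (B a : R) :
  (forall i, \sum_j `|M j i| <= B) -> eigenvalue M a -> `|a| <= B.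
Proof.
move=> colsum /eigenvalueP [v vM v0].
have [i0 vi0] : exists i0, v 0 i0 != 0.
  apply/existsP; apply: contraNT v0 => /existsPn v0.
  by apply/eqP/rowP => j; rewrite mxE; apply/eqP/negbNE/v0.
have [i _ imax] := @arg_maxP _ _ _ i0 xpredT (fun j => `|v 0 j|) isT.
have vi : 0 < `|v 0 i| by apply: lt_le_trans (imax i0 isT); rewrite normr_gt0.
have eigen_i : a * v 0 i = \sum_j v 0 j * M j i.
  by have := congr1 (fun w : 'rV_n => w 0 i) vM; rewrite /= !mxE => <-.
rewrite -(ler_pM2r vi) -normrM eigen_i [B * _]mulrC.
apply: le_trans (ler_norm_sum _ _ _) _.
apply: le_trans (ler_wpM2l (ltW vi) (colsum i)); rewrite mulr_sumr.
apply: ler_sum => j _; rewrite normrM.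
by apply: ler_wpM2r; [exact: normr_ge0 | exact: imax].
Qed.

Lemma Sigma_colsum_le (R : realType) (sigma2 phi nu tau2 h A : R) n
    (s : 'I_n -> R * R) (i : 'I_n) :
  0 <= sigma2 -> 0 <= tau2 -> 0 < h -> 0 <= A ->
  (forall d, h <= d -> matern sigma2 phi nu d <= A / d ^+ 4) ->
  (forall j k, j != k -> h <= dist2 (s j) (s k)) ->
  \sum_j `|Sigma_mat sigma2 phi nu tau2 s j i| <= sigma2 + tau2 + A * (4096 / h ^+ 4).
Proof.
move=> s0 tau0 h0 A0 decay sep.
have entry j : Sigma_mat sigma2 phi nu tau2 s j i
    = matern sigma2 phi nu (dist2 (s j) (s i)) + tau2 *+ (j == i).
  by rewrite !mxE.
rewrite (bigD1 i) //= entry dist2_xx eqxx mulr1n /matern eqxx ger0_norm ?addr_ge0 //.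
rewrite lerD2l.
under eq_bigr => j ji do rewrite entry (negbTE ji) addr0 ger0_norm ?matern_ge0 //.
apply: le_trans (ler_sum _ (fun j ji => decay _ (sep j i ji))) _.
rewrite -mulr_sumr ler_wpM2l //.
by apply: (@sum_inv_dist2_pow4_le _ _ (predC1 i)) => // [j k _ _ | j]; exact: sep.
Qed.

Theorem lemmaS4 (R : realType) (sigma2 phi nu h tau2 : R) :
  0 < sigma2 -> 0 < phi -> 0 < nu -> 0 < h -> 0 <= tau2 ->
  exists Psi : R,
    forall (n : nat) (s : 'I_n -> R * R),
      (forall i j : 'I_n, i != j -> h <= dist2 (s i) (s j)) ->
      forall lambda : R,
        eigenvalue (Sigma_mat sigma2 phi nu tau2 s) lambda -> lambda <= Psi.
Proof.
move=> s0 phi0 nu0 h0 tau0.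
have [A A0 decay] := @matern_decay R sigma2 phi nu h (ltW s0) phi0 nu0 h0.
exists (sigma2 + tau2 + A * (4096 / h ^+ 4)) => n s sep lambda ev.
apply: le_trans (ler_norm lambda) _.
apply: eigenvalue_le_colsum ev => i.
by apply: Sigma_colsum_le => //; exact: ltW.
Qed.
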